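(* Let $N$ be a pWF net with a transition $t^*$, and let $N^*$ be the pWF net consisting of a single fresh place $p^*$ (no transitions, no edges, input and output set $\{p^*\}$), so that $\mathrm{tc}(N^* )$ is the tWF net $t_i\to p^*\to t_o$ with fresh transitions $t_i,t_o$. If $N$ is sub-sound, then $N\otimes_{t^*}\mathrm{tc}(N^* )$ is sub-sound.
   Context: Petri nets and markings. A Petri net is a triple $(P,T,F)$ with $P$ a finite set of places, $T$ a finite set of transitions, $P\cap T=\emptyset$, and $F\subseteq (P\times T)\cup(T\times P)$. For a node $x$, $\bullet x=\{y\mid (y,x)\in F\}$, $x\bullet=\{y\mid (x,y)\in F\}$. A marking is a multiset over $P$ (a function $P\to\mathbb N$); sets of places are identified with bags of multiplicity one, $+,-,\le$ are pointwise, and $k.m$ is the sum of $k$ copies of $m$. Transition $t$ is enabled at $m$ iff $\bullet t\le m$, firing gives $m-\bullet t+t\bullet$, and $m\xrightarrow{*}m'$ denotes reachability by a finite (possibly empty) firing sequence. Workflow nets. A pWF net is $(P,T,F,I,O)$ with $(P,T,F)$ a Petri net, $I,O\subseteq P$ non-empty, every node reachable by a directed path from some node of $I$, and some node of $O$ reachable from every node. A tWF net is the same with $I,O$ non-empty subsets of $T$. Input nodes may have incoming edges and output nodes outgoing edges. The transition-completion $\mathrm{tc}(N)$ of a pWF net $N=(P,T,F,I,O)$ is obtained by adding two fresh transitions $t_i,t_o$ with $t_i\bullet=I$, $\bullet t_i=\emptyset$, $\bullet t_o=O$, $t_o\bullet=\emptyset$, and taking input set $\{t_i\}$ and output set $\{t_o\}$.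 Sub-soundness. A pWF net is sub-sound if for all integers $k\ge k'\ge 0$ and every marking $m'$: if $k.I\xrightarrow{*}m'+k'.O$ then $m'\xrightarrow{*}(k-k').O$. Transition substitution. For a WF net $N=(P,T,F,I,O)$ and a tWF net $M=(P',T',F',I',O')$ with disjoint node sets and $t\in T$, $N\otimes_t M$ is obtained from $N$ by deleting $t$ and all edges incident to $t$, adding all nodes and edges of $M$, adding an edge $(q,t')$ for each $q\in\bullet_N t$ and $t'\in I'$, and an edge $(t',q)$ for each $t'\in O'$ and $q\in t\bullet_N$; its input set is $(I\setminus\{t\})\cup I'$ if $t\in I$ and $I$ otherwise, and its output set is $(O\setminus\{t\})\cup O'$ if $t\in O$ and $O$ otherwise. *)

From mathcomp Require Import all_boot.
Set Implicit Arguments. Unset Strict Implicit. Unset Printing Implicit Defensive.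

(* A Petri net (P,T,F): finite types of places and transitions (disjoint by
   construction, as a sum type is used for nodes) and the flow relation F,
   split into its P x T part [pre] and its T x P part [post]. *)
Record net := Net {
  pl : finType;
  tr : finType;
  pre : pl -> tr -> bool;
  post : tr -> pl -> bool
}.

Definition node (N : net) : finType := (pl N + tr N)%type.

Definition flow (N : net) : rel (node N) :=
  fun x y => match x, y with
             | inl p, inr t => pre p t
             | inr t, inl p => post t p
             | _, _ => false
             end.

Definition marking (N : net) := {ffun pl N -> nat}.

Definition madd N (m1 m2 : marking N) : marking N := [ffun p => m1 p + m2 p].
Definition msub N (m1 m2 : marking N) : marking N := [ffun p => m1 p - m2 p].
Definition mle N (m1 m2 : marking N) : bool := [forall p, m1 p <= m2 p].
Definition mscale N (k : nat) (m : marking N) : marking N := [ffun p => k * m p].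
Definition mset N (A : {set pl N}) : marking N := [ffun p => nat_of_bool (p \in A)].

Definition preset N (t : tr N) : marking N := [ffun p => nat_of_bool (pre p t)].
Definition postset N (t : tr N) : marking N := [ffun p => nat_of_bool (post t p)].

Definition enabled N (t : tr N) (m : marking N) : bool := mle (preset t) m.
Definition fire N (t : tr N) (m : marking N) : marking N :=
  madd (msub m (preset t)) (postset t).

Inductive reach (N : net) : marking N -> marking N -> Prop :=
| reach_refl m : reach m m
| reach_step m t m' : enabled t m -> reach (fire t m) m' -> reach m m'.

Record pwf := PWF { pnet :> net; pI : {set pl pnet}; pO : {set pl pnet} }.
Record twf := TWF { tnet :> net; tI : {set tr tnet}; tO : {set tr tnet} }.

Definition is_pwf (N : pwf) : Prop :=
  [/\ pI N != set0, pO N != set0,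
      (forall x : node N, exists2 i, i \in pI N & connect (@flow N) (inl i) x)
    & (forall x : node N, exists2 o, o \in pO N & connect (@flow N) x (inl o))].

Definition is_twf (N : twf) : Prop :=
  [/\ tI N != set0, tO N != set0,
      (forall x : node N, exists2 i, i \in tI N & connect (@flow N) (inr i) x)
    & (forall x : node N, exists2 o, o \in tO N & connect (@flow N) x (inr o))].

Definition sub_sound (N : pwf) : Prop :=
  forall (k k' : nat) (m' : marking N), k' <= k ->
    reach (mscale k (mset (pI N))) (madd m' (mscale k' (mset (pO N)))) ->
    reach m' (mscale (k - k') (mset (pO N))).

(* fresh transitions: inr true = t_i, inr false = t_o *)
Definition tc_net (N : pwf) : net :=
  @Net (pl N) (tr N + bool)%type
    (fun p x => match x with
                | inl t => pre p t
                | inr true => false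
                | inr false => p \in pO N
                end)
    (fun x p => match x with
                | inl t => post t p
                | inr true => p \in pI N
                | inr false => false
                end).

Definition tc (N : pwf) : twf :=
  @TWF (tc_net N) [set inr true] [set inr false].

(* Node sets are made disjoint by taking sums: places P + P',
   transitions (T \ {t}) + T'.  Since N is a pWF net, t is not an input or
   output node of N, so the input/output sets are those of N. *)
Definition subst_net (N : pwf) (t : tr N) (M : twf) : net :=
  @Net (pl N + pl M)%type ({u : tr N | u != t} + tr M)%type
    (fun p x => match p, x with
                | inl q, inl u => pre q (val u)
                | inl q, inr t' => pre q t && (t' \in tI M)
                | inr _, inl _ => false
                | inr q, inr t' => pre q t'
                end)
    (fun x p => match x, p with
                | inl u, inl q => post (val u) q
                | inr t', inl q => (t' \in tO M) && post t q
                | inl _, inr _ => false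
                | inr t', inr q => post t' q
                end).

Arguments subst_net N t M : clear implicits.

Definition subst (N : pwf) (t : tr N) (M : twf) : pwf :=
  @PWF (subst_net N t M) [set inl q | q in pI N] [set inl q | q in pO N].

Arguments subst N t M : clear implicits.

Definition Nstar_net : net :=
  @Net unit void (fun _ _ => false) (fun _ _ => false).

Definition Nstar : pwf := @PWF Nstar_net [set: unit] [set: unit].

From mathcomp Require Import all_boot zify.

(* Substituting the transition t* of a pWF net N by the net t_i -> p* -> t_o
   splits t* in two halves: t_i consumes the preset of t* and puts one token
   on the fresh place p*, and t_o consumes that token and produces the
   postset of t*.  Write N' for the substituted net.  The proof compares the
   two nets through two marking translations:
   - [project] collapses p* : every token on p* is replaced by the postset of
     t* (the output t_o would eventually produce).  Each step of N' becomes
     at most one step of N (t_i becomes t*, t_o becomes the empty sequence),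
     so reachability in N' projects to reachability in N;
   - [embed] reads a marking of N as one of N' with p* empty; every step of N
     is simulated in N' (t* by t_i followed by t_o).
   Finally every marking m of N' reaches [embed (project m)] by firing t_o
   until p* is empty.  Sub-soundness of N' then follows: project the run of
   N', use sub-soundness of N, drain p* and embed the run back. *)

Lemma reach_trans {M : net} {a b c : marking M} :
  reach a b -> reach b c -> reach a c.
Proof. by elim=> // m t m' en _ IH /IH; apply: reach_step en. Qed.

Lemma reach_map {M M' : net} {f : marking M -> marking M'} :
  (forall (t : tr M) (m : marking M), enabled t m -> reach (f m) (f (fire t m))) ->
  forall m1 m2 : marking M, reach m1 m2 -> reach (f m1) (f m2).
Proof.
move=> step m1 m2; elim=> [m|m t m' en _ IH]; first exact: reach_refl.
exact: reach_trans (step t m en) IH.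
Qed.

Section OnePlaceSubstitution.
Variables (N : pwf) (tstar : tr N).

Local Notation N' := (subst N tstar (tc Nstar)).
Local Notation pstar := (inr tt : pl N').
Local Notation t_in := (inr (inr true) : tr N').
Local Notation t_out := (inr (inr false) : tr N').
Local Notation keep u Hu := (inl (exist _ u Hu) : tr N').

Definition project (m : marking N') : marking N :=
  [ffun p => m (inl p) + m pstar * post tstar p].

Definition embed (m : marking N) : marking N' :=
  [ffun x => if x is inl p then m p else 0].

Lemma project_fire_out (m : marking N') :
  enabled t_out m -> project (fire t_out m) = project m.
Proof.
move/forallP/(_ pstar); rewrite !ffunE /= inE => en.
by apply/ffunP => q; rewrite !ffunE /= !inE /= andbF; case: (post tstar q) => /=; lia.
Qed.

Lemma project_step (t : tr N') (m : marking N') :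
  enabled t m -> reach (project m) (project (fire t m)).
Proof.
move=> en; move/forallP: (en) => le.
case: t en le => [[u Hu]|[[]|[]]] en le.
- apply: (@reach_step _ _ u); last first.
    suff -> : fire u (project m) = project (fire (keep u Hu) m) by exact: reach_refl.
    by apply/ffunP => q; move: (le (inl q)); rewrite !ffunE /=; case: (pre q u) => /=; lia.
  by apply/forallP => q; move: (le (inl q)); rewrite !ffunE /=; lia.
- apply: (@reach_step _ _ tstar); last first.
    suff -> : fire tstar (project m) = project (fire t_in m) by exact: reach_refl.
    apply/ffunP => q; move: (le (inl q)); rewrite !ffunE /= !inE /= andbT.
    by case: (pre q tstar) => /=; lia.
  by apply/forallP => q; move: (le (inl q)); rewrite !ffunE /= !inE /= andbT; lia.
- by rewrite project_fire_out //; exact: reach_refl.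
Qed.

Lemma embed_step (t : tr N) (m : marking N) :
  enabled t m -> reach (embed m) (embed (fire t m)).
Proof.
move/forallP=> le; have [Et|Ht] := eqVneq t tstar.
- subst t; apply: (@reach_step _ _ t_in).
    apply/forallP => -[q|[]]; rewrite !ffunE /= ?inE /= ?andbT //.
    by move: (le q); rewrite !ffunE.
  apply: (@reach_step _ _ t_out).
    by apply/forallP => -[q|[]]; rewrite !ffunE /= ?inE /= ?andbF.
  suff -> : fire t_out (fire t_in (embed m)) = embed (fire tstar m) by exact: reach_refl.
  apply/ffunP => -[q|[]]; rewrite !ffunE /= ?inE /= ?andbT ?andbF //.
  by move: (le q); rewrite !ffunE /=; case: (pre q tstar) => /=; lia.
- apply: (@reach_step _ _ (keep t Ht)).
    by apply/forallP => -[q|[]]; rewrite !ffunE //=; move: (le q); rewrite !ffunE.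
  suff -> : fire (keep t Ht) (embed m) = embed (fire t m) by exact: reach_refl.
  by apply/ffunP => -[q|[]]; rewrite !ffunE //=; move: (le q); rewrite !ffunE.
Qed.

Lemma drain (m : marking N') : reach m (embed (project m)).
Proof.
move Hn: (m pstar) => n; elim: n m Hn => [|n IH] m Hn.
  suff {1}-> : m = embed (project m) by exact: reach_refl.
  by apply/ffunP => -[q|[]]; rewrite !ffunE /= ?Hn //; lia.
have en : enabled t_out m.
  by apply/forallP => -[q|[]]; rewrite !ffunE /= ?inE /= ?andbF ?Hn.
apply: (reach_step en); rewrite -(project_fire_out _ en).
by apply: IH; rewrite !ffunE /= Hn !inE /=; lia.
Qed.

Lemma in_inl_image (A : {set pl N}) (x : pl N') :
  (x \in [set (inl q : pl N') | q in A]) = if x is inl q then q \in A else false.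
Proof.
case: x => [q|[]]; last by apply/imsetP => -[].
by apply/imsetP/idP => [[y Hy [->]]|Hq] //; exists q.
Qed.

Lemma project_madd (m1 m2 : marking N') :
  project (madd m1 m2) = madd (project m1) (project m2).
Proof. by apply/ffunP => q; rewrite !ffunE /=; lia. Qed.

Lemma project_scale_set (k : nat) (A : {set pl N}) :
  project (mscale k (mset [set (inl q : pl N') | q in A])) = mscale k (mset A).
Proof. by apply/ffunP => q; rewrite !ffunE /= !in_inl_image; lia. Qed.

Lemma embed_scale_set (k : nat) (A : {set pl N}) :
  embed (mscale k (mset A)) = mscale k (mset [set (inl q : pl N') | q in A]).
Proof. by apply/ffunP => -[q|[]]; rewrite !ffunE /= in_inl_image ?muln0. Qed.

End OnePlaceSubstitution.

Theorem mainTheorem10 (N : pwf) (tstar : tr N) :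
  is_pwf N -> sub_sound N -> sub_sound (subst N tstar (tc Nstar)).
Proof.
move=> _ soundN k k' m' le_k'k run.
have runN := reach_map (project_step N tstar) _ _ run.
rewrite project_madd !project_scale_set in runN.
have run_back := reach_map (embed_step N tstar) _ _ (soundN _ _ _ le_k'k runN).
rewrite embed_scale_set in run_back.
exact: reach_trans (drain N tstar m') run_back.
Qed.
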